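(* Let $\varphi(x)$ be a formula of the correspondence language with only $x$ free, let $k=r(\varphi)$, and suppose $\varphi(x)$ is invariant with respect to $(2,2)$-modal $k$-asimulations. Then $\varphi(x)$ is logically equivalent to $ST_{22}(I,x)$ for some modal intuitionistic formula $I$.
   Context: Correspondence language: classical first-order logic without identity over $\Sigma=\{R,R_\Box,R_\Diamond,P_1,P_2,\dots\}$ ($R,R_\Box,R_\Diamond$ binary, $P_n$ unary). $\Theta$ is a subset of $\Sigma$ containing $R,R_\Box,R_\Diamond$; $\Theta$-models $M_k=\langle U_k,\iota_k\rangle$, with $R_k=\iota_k(R)$, $R_{\Box k}=\iota_k(R_\Box)$, $R_{\Diamond k}=\iota_k(R_\Diamond)$. $\Sigma_\varphi=\{R,R_\Box,R_\Diamond\}\cup\{P_n:P_n\text{ occurs in }\varphi\}$. $a\models_k\varphi(x)$ means $\varphi$ holds in $M_k$ under assignments sending $x$ to $a$. $r(\varphi)$ is quantifier depth ($0$ for atoms and $\bot$, max over binary connectives, $+1$ per quantifier). $s\overset{\leftrightarrow}{A}t$ means $sAt$ and $tAs$. Modal intuitionistic formulas: built from $p_n,\bot$ with $\wedge,\vee,\to,\Box,\Diamond$. $ST_{22}(p_n,x)=P_n(x)$, $ST_{22}(\bot,x)=\bot$, commutes with $\wedge,\vee$; $ST_{22}(I\to J,x)=\forall y(R(x,y)\to(ST_{22}(I,y)\to ST_{22}(J,y)))$; $ST_{22}(\Box I,x)=\forall y(R(x,y)\to\forall z(R_\Box(y,z)\to ST_{22}(I,z)))$; $ST_{22}(\Diamond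 I,x)=\forall y(R(x,y)\to\exists z(R_\Diamond(y,z)\wedge ST_{22}(I,z)))$. A $(2,2)$-modal $\langle(M_1,t),(M_2,u)\rangle_k$-asimulation, for pointed $\Theta$-models, is a pair $(A,B)$ of relations on finite nonempty tuples such that, for all $i,j\in\{1,2\}$, $m$, $\bar a_m,a,c,e\in U_i$, $\bar b_m,b,d,f\in U_j$, unary $P\in\Theta$: $A,B\subseteq\bigcup_{n>0}((U_1^n\times U_2^n)\cup(U_2^n\times U_1^n))$; $tAu$; if $(\bar a_m,a)A(\bar b_m,b)$ and $a\models_iP(x)$ then $b\models_jP(x)$; if $(\bar a_m,a)A(\bar b_m,b)$, $bR_jd$, $m<k$ then some $c\in U_i$ has $aR_ic$ and $(\bar a_m,a,c)\overset{\leftrightarrow}{A}(\bar b_m,b,d)$; if $(\bar a_m,a)A(\bar b_m,b)$, $bR_jd$, $dR_{\Box j}f$, $m+1<k$ then some $c,e\in U_i$ have $aR_ic$, $cR_{\Box i}e$, $(\bar a_m,a,c,e)A(\bar b_m,b,d,f)$; if $(\bar a_m,a)A(\bar b_m,b)$, $bR_jd$, $m+1<k$ then some $c\in U_i$ has $aR_ic$ and $(\bar a_m,a,c)B(\bar b_m,b,d)$; if $(\bar a_m,a)B(\bar b_m,b)$, $aR_{\Diamond i}c$, $m<k$ then some $d\in U_j$ has $bR_{\Diamond j}d$ and $(\bar a_m,a,c)A(\bar b_m,b,d)$. $\varphi(x)$ is invariant with respect to $(2,2)$-modal $k$-asimulations iff for every $\Theta\supseteq\Sigma_\varphi$, all pointed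 $\Theta$-models $(M_1,t),(M_2,u)$, every such $(A,B)$, and all $a\in U_1,b\in U_2$ with $aAb$ (one-element tuples): $a\models_1\varphi(x)$ implies $b\models_2\varphi(x)$. *)

From Stdlib Require Import List Arith.
Import ListNotations.

Inductive form : Type :=
| FR    : nat -> nat -> form
| FRbox : nat -> nat -> form
| FRdia : nat -> nat -> form
| FP    : nat -> nat -> form          (* FP n x  =  P_n(x) *)
| FBot  : form
| FAnd  : form -> form -> form
| FOr   : form -> form -> form
| FImp  : form -> form -> form
| FAll  : nat -> form -> form
| FEx   : nat -> form -> form.

Fixpoint depth (f : form) : nat :=
  match f with
  | FR _ _ | FRbox _ _ | FRdia _ _ | FP _ _ | FBot => 0
  | FAnd a b | FOr a b | FImp a b => Nat.max (depth a) (depth b)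
  | FAll _ a | FEx _ a => S (depth a)
  end.

Fixpoint free_in (y : nat) (f : form) : Prop :=
  match f with
  | FR a b | FRbox a b | FRdia a b => y = a \/ y = b
  | FP _ a => y = a
  | FBot => False
  | FAnd a b | FOr a b | FImp a b => free_in y a \/ free_in y b
  | FAll z a | FEx z a => y <> z /\ free_in y a
  end.

Fixpoint occurs_P (n : nat) (f : form) : Prop :=
  match f with
  | FP m _ => n = m
  | FR _ _ | FRbox _ _ | FRdia _ _ | FBot => False
  | FAnd a b | FOr a b | FImp a b => occurs_P n a \/ occurs_P n b
  | FAll _ a | FEx _ a => occurs_P n a
  end.

(* A model interprets R, R_Box, R_Dia and every P_n (a Theta-model is modelled as a
   model together with the set Theta of unary indices that count, see asim22). *)
Record model : Type := Model {
  dom : Type;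
  relR : dom -> dom -> Prop;
  relB : dom -> dom -> Prop;
  relD : dom -> dom -> Prop;
  predP : nat -> dom -> Prop
}.

Definition upd {U : Type} (g : nat -> U) (y : nat) (a : U) : nat -> U :=
  fun z => if Nat.eqb z y then a else g z.

Fixpoint sat (M : model) (g : nat -> dom M) (f : form) : Prop :=
  match f with
  | FR a b => relR M (g a) (g b)
  | FRbox a b => relB M (g a) (g b)
  | FRdia a b => relD M (g a) (g b)
  | FP n a => predP M n (g a)
  | FBot => False
  | FAnd a b => sat M g a /\ sat M g b
  | FOr a b => sat M g a \/ sat M g b
  | FImp a b => sat M g a -> sat M g b
  | FAll y a => forall d : dom M, sat M (upd g y d) a
  | FEx y a => exists d : dom M, sat M (upd g y d) a
  end.

Definition sat_at (M : model) (a : dom M) (x : nat) (f : form) : Prop :=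
  forall g : nat -> dom M, g x = a -> sat M g f.

Definition log_equiv (f1 f2 : form) : Prop :=
  forall (M : model) (g : nat -> dom M), sat M g f1 <-> sat M g f2.

Inductive iform : Type :=
| IVar : nat -> iform
| IBot : iform
| IAnd : iform -> iform -> iform
| IOr  : iform -> iform -> iform
| IImp : iform -> iform -> iform
| IBox : iform -> iform
| IDia : iform -> iform.

(* ST_22(I, x); bound variables y := x+1, z := x+2 are distinct from x
   (ST_22(I,x) has only x free, so no capture occurs). *)
Fixpoint ST22 (I : iform) (x : nat) : form :=
  match I with
  | IVar n => FP n x
  | IBot => FBot
  | IAnd a b => FAnd (ST22 a x) (ST22 b x)
  | IOr a b => FOr (ST22 a x) (ST22 b x)
  | IImp a b =>
      FAll (S x) (FImp (FR x (S x)) (FImp (ST22 a (S x)) (ST22 b (S x))))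
  | IBox a =>
      FAll (S x) (FImp (FR x (S x))
        (FAll (S (S x)) (FImp (FRbox (S x) (S (S x))) (ST22 a (S (S x))))))
  | IDia a =>
      FAll (S x) (FImp (FR x (S x))
        (FEx (S (S x)) (FAnd (FRdia (S x) (S (S x))) (ST22 a (S (S x))))))
  end.

(* Tuples are lists; (abar_m, a) is  abar ++ [a]  with m = length abar.
   A relation from U_i-tuples to U_j-tuples (i <> j) is split into its two
   directions A12 / A21 (resp. B12 / B21). *)
Definition asim_dir (Th : nat -> Prop) (k : nat) (Mi Mj : model)
  (Aij : list (dom Mi) -> list (dom Mj) -> Prop)
  (Aji : list (dom Mj) -> list (dom Mi) -> Prop)
  (Bij : list (dom Mi) -> list (dom Mj) -> Prop) : Prop :=
  (forall (as_ : list (dom Mi)) (a : dom Mi) (bs : list (dom Mj)) (b : dom Mj) (n : nat),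
      Aij (as_ ++ [a]) (bs ++ [b]) -> Th n -> predP Mi n a -> predP Mj n b)
  /\
  (forall as_ a bs b (d : dom Mj),
      Aij (as_ ++ [a]) (bs ++ [b]) -> relR Mj b d -> length as_ < k ->
      exists c : dom Mi, relR Mi a c /\
        Aij (as_ ++ [a; c]) (bs ++ [b; d]) /\ Aji (bs ++ [b; d]) (as_ ++ [a; c]))
  /\
  (forall as_ a bs b (d f : dom Mj),
      Aij (as_ ++ [a]) (bs ++ [b]) -> relR Mj b d -> relB Mj d f -> S (length as_) < k ->
      exists c e : dom Mi, relR Mi a c /\ relB Mi c e /\
        Aij (as_ ++ [a; c; e]) (bs ++ [b; d; f]))
  /\
  (forall as_ a bs b (d : dom Mj),
      Aij (as_ ++ [a]) (bs ++ [b]) -> relR Mj b d -> S (length as_) < k ->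
      exists c : dom Mi, relR Mi a c /\ Bij (as_ ++ [a; c]) (bs ++ [b; d]))
  /\
  (forall as_ a bs b (c : dom Mi),
      Bij (as_ ++ [a]) (bs ++ [b]) -> relD Mi a c -> length as_ < k ->
      exists d : dom Mj, relD Mj b d /\ Aij (as_ ++ [a; c]) (bs ++ [b; d])).

Definition tuple_rel {U V : Type} (X : list U -> list V -> Prop) : Prop :=
  forall s t, X s t -> length s = length t /\ s <> [].

(* (A,B) is a (2,2)-modal <(M1,t),(M2,u)>_k-asimulation for Theta-models, where
   Th is the set of indices n with P_n in Theta (R, R_Box, R_Dia always in Theta). *)
Definition asim22 (Th : nat -> Prop) (k : nat) (M1 M2 : model) (t : dom M1) (u : dom M2)
  (A12 : list (dom M1) -> list (dom M2) -> Prop)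
  (A21 : list (dom M2) -> list (dom M1) -> Prop)
  (B12 : list (dom M1) -> list (dom M2) -> Prop)
  (B21 : list (dom M2) -> list (dom M1) -> Prop) : Prop :=
  tuple_rel A12 /\ tuple_rel A21 /\ tuple_rel B12 /\ tuple_rel B21 /\
  A12 [t] [u] /\
  asim_dir Th k M1 M2 A12 A21 B12 /\
  asim_dir Th k M2 M1 A21 A12 B21.

Definition invariant22 (f : form) (x : nat) (k : nat) : Prop :=
  forall (Th : nat -> Prop), (forall n, occurs_P n f -> Th n) ->
  forall (M1 M2 : model) (t : dom M1) (u : dom M2) A12 A21 B12 B21,
    asim22 Th k M1 M2 t u A12 A21 B12 B21 ->
    forall (a : dom M1) (b : dom M2), A12 [a] [b] ->
      sat_at M1 a x f -> sat_at M2 b x f.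

(** Let [k] be the depth of [phi] and fix its unary predicates.  For each [n] there is a
    finite list of modal intuitionistic formulas of depth at most [n] over these
    predicates which is rich enough that, if every listed formula of depth [n+1] true at
    [a] is true at [b], each back-and-forth clause of an asimulation can be met at depth
    [n]: otherwise some listed formula would separate [a] from [b].  Relating tuples by
    this inclusion of types at the remaining depth is therefore a (2,2)-modal
    [k]-asimulation, along which the invariant [phi] is preserved.  Hence [phi] is
    equivalent to the disjunction of the finitely many depth-[k] types of points
    satisfying [phi], each type being the conjunction of its listed formulas. *)
From Stdlib Require Import List Arith Lia Classical.
Import ListNotations.

Lemma upd_same {U} (g : nat -> U) y a : upd g y a y = a.
Proof. unfold upd; rewrite Nat.eqb_refl; reflexivity. Qed.

Lemma upd_other {U} (g : nat -> U) y a z : z <> y -> upd g y a z = g z.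
Proof. intro Hzy; unfold upd; destruct (Nat.eqb_spec z y); [contradiction | reflexivity]. Qed.

Ltac simpl_upd := repeat (rewrite ?upd_same; rewrite ?upd_other by lia).
Ltac simpl_upd_in H := repeat (rewrite ?upd_same in H; rewrite ?upd_other in H by lia).

Lemma sat_free_ext f M g g' :
  (forall y, free_in y f -> g y = g' y) -> (sat M g f <-> sat M g' f).
Proof.
  revert g g'; induction f; intros g g' Hg; simpl in *;
    try (rewrite (Hg n), (Hg n0) by auto; reflexivity).
  - rewrite (Hg n0) by auto; reflexivity.
  - reflexivity.
  - rewrite (IHf1 g g'), (IHf2 g g') by auto; reflexivity.
  - rewrite (IHf1 g g'), (IHf2 g g') by auto; reflexivity.
  - rewrite (IHf1 g g'), (IHf2 g g') by auto; reflexivity.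
  - assert (Hd : forall d y, free_in y f -> upd g n d y = upd g' n d y).
    { intros d y Hy; destruct (Nat.eq_dec y n) as [->|Hyn]; simpl_upd; auto. }
    split; intros Hs d; [rewrite <- (IHf _ _ (Hd d)) | rewrite (IHf _ _ (Hd d))]; auto.
  - assert (Hd : forall d y, free_in y f -> upd g n d y = upd g' n d y).
    { intros d y Hy; destruct (Nat.eq_dec y n) as [->|Hyn]; simpl_upd; auto. }
    split; intros [d Hs]; exists d; [rewrite <- (IHf _ _ (Hd d)) | rewrite (IHf _ _ (Hd d))]; auto.
Qed.

Lemma sat_at_of_sat f x M g :
  (forall y, free_in y f -> y = x) -> sat M g f -> sat_at M (g x) x f.
Proof.
  intros Hfree Hs g' Hg'; refine (proj1 (sat_free_ext f M g g' _) Hs).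
  intros y Hy; rewrite (Hfree y Hy); auto.
Qed.

Fixpoint isat (M : model) (a : dom M) (I : iform) : Prop :=
  match I with
  | IVar n => predP M n a
  | IBot => False
  | IAnd p q => isat M a p /\ isat M a q
  | IOr p q => isat M a p \/ isat M a q
  | IImp p q => forall c, relR M a c -> isat M c p -> isat M c q
  | IBox p => forall c, relR M a c -> forall e, relB M c e -> isat M e p
  | IDia p => forall c, relR M a c -> exists e, relD M c e /\ isat M e p
  end.

Lemma sat_ST22 I x M g : sat M g (ST22 I x) <-> isat M (g x) I.
Proof.
  revert x g; induction I; intros x g; simpl.
  - reflexivity.
  - reflexivity.
  - rewrite IHI1, IHI2; reflexivity.
  - rewrite IHI1, IHI2; reflexivity.
  - split; intros H d; specialize (H d); rewrite ?IHI1, ?IHI2 in *; simpl_upd; simpl_upd_in H;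
      exact H.
  - split; intros H d; specialize (H d).
    + intros Hr e He; specialize (H ltac:(simpl_upd; exact Hr) e ltac:(simpl_upd; exact He)).
      rewrite IHI, upd_same in H; exact H.
    + intros Hr e He; simpl_upd_in Hr; simpl_upd_in He.
      rewrite IHI, upd_same; exact (H Hr e He).
  - split; intros H d; specialize (H d); intros Hr.
    + destruct (H ltac:(simpl_upd; exact Hr)) as [e [Hde He]]; exists e.
      rewrite IHI in He; simpl_upd_in Hde; simpl_upd_in He; auto.
    + simpl_upd_in Hr; destruct (H Hr) as [e [Hde He]]; exists e.
      rewrite IHI; simpl_upd; auto.
Qed.

Definition ITop : iform := IImp IBot IBot.

Fixpoint Conj (l : list iform) : iform :=
  match l with [] => ITop | J :: r => IAnd J (Conj r) end.

Fixpoint Disj (l : list iform) : iform :=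
  match l with [] => IBot | J :: r => IOr J (Disj r) end.

Lemma isat_Conj M a l : isat M a (Conj l) <-> forall I, In I l -> isat M a I.
Proof.
  induction l as [|J l IH]; simpl.
  - split; [tauto | intros _ c _ H; exact H].
  - rewrite IH; split; [intros [HJ Hl] I [<-|HI]; auto | intros H; split; auto].
Qed.

Lemma isat_Disj M a l : isat M a (Disj l) <-> exists I, In I l /\ isat M a I.
Proof.
  induction l as [|J l IH]; simpl.
  - split; [tauto | intros [I [[] _]]].
  - rewrite IH; split.
    + intros [H | [I [HI H]]]; eauto.
    + intros [I [[<-|HI] H]]; eauto.
Qed.

Fixpoint sublists {T : Type} (l : list T) : list (list T) :=
  match l with
  | [] => [[]]
  | x :: r => map (cons x) (sublists r) ++ sublists r
  end.

Lemma sublists_filter {T : Type} (Q : T -> Prop) l :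
  exists S, In S (sublists l) /\ (forall y, In y S <-> In y l /\ Q y).
Proof.
  induction l as [|x r [S [HS HSQ]]].
  - exists []; simpl; split; [auto | intros y; tauto].
  - destruct (classic (Q x)) as [Hq | Hq].
    + exists (x :: S); split.
      * simpl; apply in_or_app; left; apply in_map; auto.
      * intros y; simpl; rewrite HSQ; split; [intros [<-|[]]|intros [[<-|Hy] Hq']]; auto.
    + exists S; split.
      * simpl; apply in_or_app; right; auto.
      * intros y; simpl; rewrite HSQ; split; [intros []|intros [[<-|Hy] Hq']]; auto; contradiction.
Qed.

(* Disjunctions of conjunctions under [IDia] are needed because [IDia] does not
   distribute over [IOr]; all other connectives only need one level of lists. *)
Fixpoint normal_forms (V : list nat) (n : nat) : list iform :=
  match n with
  | 0 => map IVar V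
  | S n' =>
      let L := normal_forms V n' in
      L ++ map (fun p => IImp (Conj (fst p)) (Disj (snd p))) (list_prod (sublists L) (sublists L))
        ++ map (fun X => IBox (Disj X)) (sublists L)
        ++ map (fun T => IDia (Disj (map Conj T))) (sublists (sublists L))
  end.

Lemma normal_forms_succ V n I : In I (normal_forms V n) -> In I (normal_forms V (S n)).
Proof. intro H; simpl; apply in_or_app; auto. Qed.

Lemma normal_forms_var V n m : In n V -> In (IVar n) (normal_forms V m).
Proof.
  intros H; induction m; [simpl; apply in_map; auto | apply normal_forms_succ; auto].
Qed.

Lemma normal_forms_imp V n S1 S2 :
  In S1 (sublists (normal_forms V n)) -> In S2 (sublists (normal_forms V n)) ->
  In (IImp (Conj S1) (Disj S2)) (normal_forms V (S n)).
Proof.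
  intros H1 H2; simpl; apply in_or_app; right; apply in_or_app; left.
  apply (in_map (fun p => IImp (Conj (fst p)) (Disj (snd p))) _ (S1, S2)).
  apply in_prod; auto.
Qed.

Lemma normal_forms_box V n X :
  In X (sublists (normal_forms V n)) -> In (IBox (Disj X)) (normal_forms V (S n)).
Proof.
  intros H; simpl; do 2 (apply in_or_app; right); apply in_or_app; left.
  apply (in_map (fun X => IBox (Disj X))); auto.
Qed.

Lemma normal_forms_dia V n T :
  In T (sublists (sublists (normal_forms V n))) ->
  In (IDia (Disj (map Conj T))) (normal_forms V (S n)).
Proof.
  intros H; simpl; do 3 (apply in_or_app; right).
  apply (in_map (fun T => IDia (Disj (map Conj T)))); auto.
Qed.

Section TypeInclusion.

Variables (V : list nat) (Mi Mj : model).

Definition thy_incl (n : nat) (a : dom Mi) (b : dom Mj) : Prop :=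
  forall I, In I (normal_forms V n) -> isat Mi a I -> isat Mj b I.

Definition dia_incl (n : nat) (a : dom Mi) (b : dom Mj) : Prop :=
  forall c, relD Mi a c -> exists d, relD Mj b d /\ thy_incl n c d.

Lemma thy_incl_succ n a b : thy_incl (S n) a b -> thy_incl n a b.
Proof. intros H I HI; apply H, normal_forms_succ, HI. Qed.

Lemma thy_incl_pred n p a b : In p V -> thy_incl n a b -> predP Mi p a -> predP Mj p b.
Proof. intros Hp H; apply (H (IVar p)), normal_forms_var, Hp. Qed.

Lemma thy_incl_of_type n a b X :
  (forall I, In I X <-> In I (normal_forms V n) /\ isat Mi a I) ->
  isat Mj b (Conj X) -> thy_incl n a b.
Proof. intros HX Hb I HI Ha; apply (proj1 (isat_Conj _ _ _) Hb), HX; auto. Qed.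

End TypeInclusion.

Section Forth.

Variables (V : list nat) (Mi Mj : model) (n : nat) (a : dom Mi) (b : dom Mj).
Hypothesis Hab : thy_incl V Mi Mj (S n) a b.

(* If no successor of [a] matched [d] both ways, the implication from the type of [d]
   to the disjunction of the normal forms false at [d] would hold at [a] but not at [b]. *)
Lemma thy_incl_forth_R d : relR Mj b d ->
  exists c, relR Mi a c /\ thy_incl V Mi Mj n c d /\ thy_incl V Mj Mi n d c.
Proof.
  intros Hbd; apply NNPP; intros Hno.
  destruct (sublists_filter (isat Mj d) (normal_forms V n)) as [S1 [HS1 HS1d]].
  destruct (sublists_filter (fun J => ~ isat Mj d J) (normal_forms V n)) as [S2 [HS2 HS2d]].
  assert (Ha : isat Mi a (IImp (Conj S1) (Disj S2))).
  { intros c Hac HC; apply NNPP; intros HD; apply Hno; exists c; split; [auto | split].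
    - intros I HI Hc; apply NNPP; intros Hd; apply HD, isat_Disj.
      exists I; split; auto; apply HS2d; auto.
    - apply (thy_incl_of_type V Mj Mi n d c S1 HS1d HC). }
  apply Hab in Ha; [|apply normal_forms_imp; auto].
  assert (HC : isat Mj d (Conj S1)) by (apply isat_Conj; intros I HI; apply HS1d, HI).
  destruct (proj1 (isat_Disj _ _ _) (Ha d Hbd HC)) as [I [HI HId]].
  apply HS2d in HI; tauto.
Qed.

Lemma thy_incl_forth_box d f : relR Mj b d -> relB Mj d f ->
  exists c e, relR Mi a c /\ relB Mi c e /\ thy_incl V Mi Mj n e f.
Proof.
  intros Hbd Hdf; apply NNPP; intros Hno.
  destruct (sublists_filter (fun J => ~ isat Mj f J) (normal_forms V n)) as [T [HT HTf]].
  assert (Ha : isat Mi a (IBox (Disj T))).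
  { intros c Hac e Hce; apply NNPP; intros HD; apply Hno; exists c, e; do 2 (split; auto).
    intros I HI He; apply NNPP; intros Hf; apply HD, isat_Disj.
    exists I; split; auto; apply HTf; auto. }
  apply Hab in Ha; [|apply normal_forms_box; auto].
  destruct (proj1 (isat_Disj _ _ _) (Ha d Hbd f Hdf)) as [I [HI HIf]].
  apply HTf in HI; tauto.
Qed.

(* Otherwise [a] would force [IDia] of the disjunction of all listed conjunctions
   holding at no [relD]-successor of [d], while [b] does not. *)
Lemma thy_incl_forth_dia d : relR Mj b d ->
  exists c, relR Mi a c /\ dia_incl V Mi Mj n c d.
Proof.
  intros Hbd; apply NNPP; intros Hno.
  destruct (sublists_filter
              (fun X => forall d', relD Mj d d' -> ~ isat Mj d' (Conj X))
              (sublists (normal_forms V n))) as [T [HT HTd]].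
  assert (Ha : isat Mi a (IDia (Disj (map Conj T)))).
  { intros c Hac.
    assert (Hc : exists c', relD Mi c c' /\ forall d', relD Mj d d' -> ~ thy_incl V Mi Mj n c' d').
    { apply NNPP; intros Hno2; apply Hno; exists c; split; auto.
      intros c' Hcc'; apply NNPP; intros H2; apply Hno2; exists c'; split; auto.
      intros d' Hdd' Ht; apply H2; exists d'; auto. }
    destruct Hc as [c' [Hcc' Hc']].
    destruct (sublists_filter (isat Mi c') (normal_forms V n)) as [X [HX HXc]].
    exists c'; split; auto; apply isat_Disj; exists (Conj X); split.
    - apply in_map, HTd; split; auto.
      intros d' Hdd' HC; apply (Hc' d' Hdd'), (thy_incl_of_type V Mi Mj n c' d' X HXc HC).
    - apply isat_Conj; intros I HI; apply HXc, HI. }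
  apply Hab in Ha; [|apply normal_forms_dia; auto].
  destruct (Ha d Hbd) as [d' [Hdd' HD]].
  destruct (proj1 (isat_Disj _ _ _) HD) as [Y [HY HYd]].
  apply in_map_iff in HY; destruct HY as [X [<- HX]].
  apply HTd in HX; destruct HX as [_ HX]; exact (HX d' Hdd' HYd).
Qed.

End Forth.

Definition last_pair_rel {U W : Type} (P : nat -> U -> W -> Prop)
  (s : list U) (t : list W) : Prop :=
  exists s0 a t0 b, s = s0 ++ [a] /\ t = t0 ++ [b] /\ length s0 = length t0 /\ P (length s0) a b.

Lemma last_pair_rel_snoc {U W : Type} (P : nat -> U -> W -> Prop) s a t b :
  last_pair_rel P (s ++ [a]) (t ++ [b]) <-> length s = length t /\ P (length s) a b.
Proof.
  split.
  - intros [s0 [a0 [t0 [b0 [Es [Et H]]]]]].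
    apply app_inj_tail in Es; apply app_inj_tail in Et.
    destruct Es, Et; subst; exact H.
  - intros H; exists s, a, t, b; auto.
Qed.

Lemma last_pair_rel_snoc2 {U W : Type} (P : nat -> U -> W -> Prop) s a c t b d :
  length s = length t -> P (S (length s)) c d -> last_pair_rel P (s ++ [a; c]) (t ++ [b; d]).
Proof.
  intros Hl H; change (last_pair_rel P (s ++ [a] ++ [c]) (t ++ [b] ++ [d])).
  rewrite !app_assoc; apply last_pair_rel_snoc.
  rewrite !length_app, !Nat.add_1_r; simpl; auto.
Qed.

Lemma last_pair_rel_snoc3 {U W : Type} (P : nat -> U -> W -> Prop) s a c e t b d f :
  length s = length t -> P (S (S (length s))) e f ->
  last_pair_rel P (s ++ [a; c; e]) (t ++ [b; d; f]).
Proof.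
  intros Hl H; change (last_pair_rel P (s ++ [a; c] ++ [e]) (t ++ [b; d] ++ [f])).
  rewrite !app_assoc; apply last_pair_rel_snoc.
  rewrite !length_app; simpl; rewrite !Nat.add_succ_r, !Nat.add_0_r; auto.
Qed.

Lemma tuple_rel_last_pair_rel {U W : Type} (P : nat -> U -> W -> Prop) :
  tuple_rel (last_pair_rel P).
Proof.
  intros s t [s0 [a [t0 [b [-> [-> [Hl _]]]]]]].
  rewrite !length_app; split; [simpl; lia | destruct s0; discriminate].
Qed.

(* A tuple of length [m+1] has [k - m] quantifier levels left. *)
Definition Atype V k Mi Mj := last_pair_rel (fun m => thy_incl V Mi Mj (k - m)).
Definition Btype V k Mi Mj := last_pair_rel (fun m => dia_incl V Mi Mj (k - S m)).

Lemma asim_dir_type V k (Th : nat -> Prop) Mi Mj : (forall n, Th n -> In n V) ->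
  asim_dir Th k Mi Mj (Atype V k Mi Mj) (Atype V k Mj Mi) (Btype V k Mi Mj).
Proof.
  intros HV; unfold Atype, Btype.
  split; [|split; [|split; [|split]]].
  - intros as_ a bs b p HA Hp; apply last_pair_rel_snoc in HA.
    apply (thy_incl_pred V Mi Mj (k - length as_)); [apply HV, Hp | apply HA].
  - intros as_ a bs b d HA Hbd Hlt; apply last_pair_rel_snoc in HA; destruct HA as [Hl Ht].
    replace (k - length as_) with (S (k - S (length as_))) in Ht by lia.
    destruct (thy_incl_forth_R _ _ _ _ _ _ Ht d Hbd) as [c [Hac [Hcd Hdc]]].
    exists c; split; [|split; apply last_pair_rel_snoc2]; rewrite <- ?Hl; auto.
  - intros as_ a bs b d f HA Hbd Hdf Hlt; apply last_pair_rel_snoc in HA; destruct HA as [Hl Ht].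
    replace (k - length as_) with (S (S (k - S (S (length as_))))) in Ht by lia.
    apply thy_incl_succ in Ht.
    destruct (thy_incl_forth_box _ _ _ _ _ _ Ht d f Hbd Hdf) as [c [e [Hac [Hce Hef]]]].
    exists c, e; do 2 (split; auto); apply last_pair_rel_snoc3; auto.
  - intros as_ a bs b d HA Hbd Hlt; apply last_pair_rel_snoc in HA; destruct HA as [Hl Ht].
    replace (k - length as_) with (S (S (k - S (S (length as_))))) in Ht by lia.
    apply thy_incl_succ in Ht.
    destruct (thy_incl_forth_dia _ _ _ _ _ _ Ht d Hbd) as [c [Hac Hcd]].
    exists c; split; [|apply last_pair_rel_snoc2]; auto.
  - intros as_ a bs b c HB Hac Hlt; apply last_pair_rel_snoc in HB; destruct HB as [Hl Hd].
    destruct (Hd c Hac) as [d [Hbd Hcd]].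
    exists d; split; [|apply last_pair_rel_snoc2]; auto.
Qed.

Lemma Atype_init V k M1 M2 a b :
  thy_incl V M1 M2 k a b -> Atype V k M1 M2 [a] [b].
Proof. intros Hab; apply (last_pair_rel_snoc _ [] a [] b); simpl; rewrite Nat.sub_0_r; auto. Qed.

Lemma asim22_type V k (Th : nat -> Prop) M1 M2 a b :
  (forall n, Th n -> In n V) -> thy_incl V M1 M2 k a b ->
  asim22 Th k M1 M2 a b (Atype V k M1 M2) (Atype V k M2 M1) (Btype V k M1 M2) (Btype V k M2 M1).
Proof.
  intros HV Hab.
  do 4 (split; [apply tuple_rel_last_pair_rel|]).
  split; [apply Atype_init, Hab | split; apply asim_dir_type, HV].
Qed.

Fixpoint Pvars (f : form) : list nat :=
  match f with
  | FP n _ => [n]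
  | FAnd a b | FOr a b | FImp a b => Pvars a ++ Pvars b
  | FAll _ a | FEx _ a => Pvars a
  | _ => []
  end.

Lemma In_Pvars n f : occurs_P n f -> In n (Pvars f).
Proof. induction f; simpl; intuition; apply in_or_app; auto. Qed.

Lemma invariant22_thy_incl phi x k M1 M2 a b :
  invariant22 phi x k -> thy_incl (Pvars phi) M1 M2 k a b ->
  sat_at M1 a x phi -> sat_at M2 b x phi.
Proof.
  intros Hinv Hab.
  apply (Hinv _ (fun n H => H) M1 M2 a b _ _ _ _
           (asim22_type _ _ _ _ _ _ _ (fun n => In_Pvars n phi) Hab)).
  apply Atype_init, Hab.
Qed.

Theorem mainTheorem5 (phi : form) (x : nat) :
  (forall y, free_in y phi -> y = x) ->
  invariant22 phi x (depth phi) ->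
  exists I : iform, log_equiv phi (ST22 I x).
Proof.
  intros Hfree Hinv.
  set (L := normal_forms (Pvars phi) (depth phi)).
  destruct (sublists_filter (fun X => exists (M : model) (a : dom M), sat_at M a x phi /\
                     (forall I, In I X <-> In I L /\ isat M a I)) (sublists L))
    as [Types [_ HTypes]].
  exists (Disj (map Conj Types)).
  intros M g; rewrite sat_ST22, isat_Disj; split.
  - intros Hs.
    destruct (sublists_filter (isat M (g x)) L) as [X [HX HXa]].
    exists (Conj X); split.
    + apply in_map, HTypes; split; auto.
      exists M, (g x); split; [apply sat_at_of_sat|]; auto.
    + apply isat_Conj; intros I HI; apply HXa, HI.
  - intros [Y [HY HYg]].
    apply in_map_iff in HY; destruct HY as [X [<- HX]].
    apply HTypes in HX; destruct HX as [_ [M1 [a1 [Ha1 HXa]]]].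
    apply (invariant22_thy_incl phi x (depth phi) M1 M a1 (g x) Hinv); auto.
    exact (thy_incl_of_type _ _ _ _ _ _ _ HXa HYg).
Qed.
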